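(* Let $\psi,\varphi$ be CNF formulas neither of which contains a tautological clause. If $\psi\models\varphi$, then $\psi[x_\varepsilon]\models\varphi[x_\varepsilon]$ for every variable $x\in\mathrm{Vars}(\varphi)\cup\mathrm{Vars}(\psi)$.
   Context: A CNF formula is a finite set of clauses, each clause a finite set of literals; the empty clause is unsatisfiable and the empty CNF formula is true. A clause is tautological if it contains both $x$ and $\neg x$ for some variable $x$. For a CNF formula $\phi$ and a variable $x$, the deletion reduct $\phi[x_\varepsilon]$ is obtained from $\phi$ by deleting all occurrences of the literals $x$ and $\neg x$ from all clauses (clauses are kept, possibly becoming empty). $\models$ denotes classical propositional entailment. *)

From mathcomp Require Import all_boot.
Set Implicit Arguments. Unset Strict Implicit. Unset Printing Implicit Defensive.

(* A literal is a pair (v, b):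
   (v, true) is the positive literal v, (v, false) is the negative literal ~v.
   A clause is a finite collection of literals (a seq, read as a set);
   a CNF formula is a finite collection of clauses (a seq, read as a set). *)
Definition literal (V : eqType) := (V * bool)%type.
Definition clause (V : eqType) := seq (literal V).
Definition cnf (V : eqType) := seq (clause V).

Definition eval_lit (V : eqType) (a : V -> bool) (l : literal V) : bool :=
  if l.2 then a l.1 else ~~ a l.1.

Definition sat_clause (V : eqType) (a : V -> bool) (C : clause V) : bool :=
  has (eval_lit a) C.

Definition sat_cnf (V : eqType) (a : V -> bool) (phi : cnf V) : bool :=
  all (sat_clause a) phi.

Definition entails (V : eqType) (psi phi : cnf V) : Prop :=
  forall a : V -> bool, sat_cnf a psi -> sat_cnf a phi.

Definition tautological (V : eqType) (C : clause V) : Prop :=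
  exists x : V, (x, true) \in C /\ (x, false) \in C.

Definition no_taut (V : eqType) (phi : cnf V) : Prop :=
  forall C, C \in phi -> ~ tautological C.

Definition var_of (V : eqType) (x : V) (phi : cnf V) : Prop :=
  exists2 C, C \in phi & exists b, (x, b) \in C.

(* Deletion reduct phi[x_eps]: delete literals x and ~x from all clauses,
   keeping the clauses (possibly empty). *)
Definition del_reduct (V : eqType) (phi : cnf V) (x : V) : cnf V :=
  map (filter (fun l : literal V => l.1 != x)) phi.

(* Let a satisfy psi[x_eps].  Both extensions of a setting x to true and to
   false satisfy psi, hence phi.  A clause of phi whose reduct fails under a
   must then be satisfied through its x-literals under both extensions, so it
   contains x and ~x, which is excluded. *)
From mathcomp Require Import all_boot.

Set Implicit Arguments.
Unset Strict Implicit.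
Unset Printing Implicit Defensive.

Section DeletionReduct.

Variable V : eqType.
Implicit Types (a : V -> bool) (x : V) (b : bool) (C : clause V) (psi : cnf V).

Definition del_lits x C : clause V := [seq l <- C | l.1 != x].

Lemma del_reductE psi x : del_reduct psi x = map (del_lits x) psi.
Proof. by []. Qed.

Lemma sat_clause_filter a (P : pred (literal V)) C :
  sat_clause a (filter P C) -> sat_clause a C.
Proof.
by move=> /hasP[l]; rewrite mem_filter => /andP[_ lC] al; apply/hasP; exists l.
Qed.

Lemma sat_del_lits_upd a x b C :
  sat_clause [eta a with x |-> b] (del_lits x C) = sat_clause a (del_lits x C).
Proof.
apply: eq_in_has => l; rewrite mem_filter => /andP[lx _].
by rewrite /eval_lit /= (negbTE lx).
Qed.

Lemma sat_cnf_upd_of_del_reduct a x b psi :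
  sat_cnf a (del_reduct psi x) -> sat_cnf [eta a with x |-> b] psi.
Proof.
move=> /allP sat_red; apply/allP => C Cpsi.
apply: (@sat_clause_filter _ (fun l : literal V => l.1 != x)).
by rewrite sat_del_lits_upd; apply: sat_red; apply: map_f.
Qed.

Lemma sat_clause_upd a x b C :
  sat_clause [eta a with x |-> b] C -> sat_clause a (del_lits x C) \/ (x, b) \in C.
Proof.
move=> /hasP[[v c] vcC]; have [vx | vx] := eqVneq v x.
  by subst v; rewrite /eval_lit /= eqxx; case: c b vcC => [] [] // xcC _; right.
rewrite -(sat_del_lits_upd a x b) => sat_vc; left.
by apply/hasP; exists (v, c); rewrite // mem_filter vx.
Qed.

Lemma sat_del_lits_of_upd a x C :
  ~ tautological C ->
  sat_clause [eta a with x |-> true] C -> sat_clause [eta a with x |-> false] C ->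
  sat_clause a (del_lits x C).
Proof.
move=> not_taut /sat_clause_upd[// | xC] /sat_clause_upd[// | nxC].
by case: not_taut; exists x.
Qed.

End DeletionReduct.

Theorem mainTheorem3 (V : eqType) (psi phi : cnf V) :
  no_taut psi -> no_taut phi -> entails psi phi ->
  forall x : V, var_of x phi \/ var_of x psi ->
    entails (del_reduct psi x) (del_reduct phi x).
Proof.
move=> _ phi_no_taut psi_phi x _ a sat_red.
have sat_upd b : sat_cnf [eta a with x |-> b] phi.
  by apply: psi_phi; apply: sat_cnf_upd_of_del_reduct.
rewrite del_reductE; apply/allP => _ /mapP[C Cphi ->].
apply: sat_del_lits_of_upd; first exact: phi_no_taut.
  by move/allP: (sat_upd true); apply.
by move/allP: (sat_upd false); apply.
Qed.
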